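(* For all integers $D$ and $a$ there exists $T$ such that if $G$ is a clique-sum of graphs each having at most $a$ vertices of degree greater than $D$, then $G$ has $\infty$-admissibility at most $T$.
   Context: All graphs are finite and simple. Given an ordering $v_1,\ldots,v_n$ of $V(G)$, the $\infty$-backconnectivity of $v_k$ is the maximum number of paths (of any length) from $v_k$ to $\{v_1,\ldots,v_{k-1}\}$ that pairwise intersect only in $v_k$. The $\infty$-admissibility of the ordering is the maximum $\infty$-backconnectivity of its vertices, and the $\infty$-admissibility of $G$ is the minimum over all orderings. A clique-sum of $G_1$ and $G_2$ is obtained by identifying the vertices of a clique in $G_1$ with those of an equal-size clique in $G_2$ and possibly deleting some edges; a clique-sum of several graphs is obtained by repeated clique-sums. *)

From mathcomp Require Import all_boot.
Set Implicit Arguments. Unset Strict Implicit. Unset Printing Implicit Defensive.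

Definition simple_graph (V : finType) (e : rel V) : Prop :=
  symmetric e /\ irreflexive e.

Definition degree (V : finType) (e : rel V) (x : V) : nat := #|[set y | e x y]|.

Definition few_high_degree (D a : nat) (V : finType) (e : rel V) : Prop :=
  #|[set x | D < degree e x]| <= a.

Definition is_clique (V : finType) (e : rel V) (K : pred V) : Prop :=
  forall x y, K x -> K y -> x != y -> e x y.

(* (V, e) is a clique-sum of (V1, e1) and (V2, e2): V is covered by injective
   copies f1(V1), f2(V2); their overlap is the image of a clique K1 of e1 and of
   a clique K2 of e2 (identified by f2^-1 o f1, so |K1| = |K2|); every edge of
   G comes from an edge of G1 or G2; every edge of G1, G2 not inside the
   identified clique is kept (edges inside the clique may be deleted). *)
Definition is_clique_sum (V1 : finType) (e1 : rel V1) (V2 : finType) (e2 : rel V2)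
    (V : finType) (e : rel V) : Prop :=
  exists (f1 : V1 -> V) (f2 : V2 -> V),
    [/\ injective f1, injective f2,
        (forall x, (exists y, f1 y = x) \/ (exists y, f2 y = x)),
        is_clique e1 (fun y => [exists z, f2 z == f1 y]) &
        is_clique e2 (fun z => [exists y, f1 y == f2 z])] /\
    [/\ (forall y y', e1 y y' ->
           ~ ([exists z, f2 z == f1 y] /\ [exists z, f2 z == f1 y']) ->
           e (f1 y) (f1 y')),
        (forall z z', e2 z z' ->
           ~ ([exists y, f1 y == f2 z] /\ [exists y, f1 y == f2 z']) ->
           e (f2 z) (f2 z')) &
        (forall x x', e x x' ->
           (exists y y', [/\ f1 y = x, f1 y' = x' & e1 y y']) \/
           (exists z z', [/\ f2 z = x, f2 z' = x' & e2 z z']))].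

Inductive clique_sum_of (P : forall V : finType, rel V -> Prop) :
    forall V : finType, rel V -> Prop :=
  | cs_base (V : finType) (e : rel V) :
      simple_graph e -> P V e -> clique_sum_of P e
  | cs_step (V1 : finType) (e1 : rel V1) (V2 : finType) (e2 : rel V2)
      (V : finType) (e : rel V) :
      clique_sum_of P e1 -> clique_sum_of P e2 ->
      simple_graph e -> is_clique_sum e1 e2 e -> clique_sum_of P e.

(* An ordering of V is given by an injective rank function r : V -> nat
   (u comes before v iff r u < r v).
   A back-path of v w.r.t. r: a path v = x0, x1, ..., xk (k >= 1) in e, with
   distinct vertices, whose last vertex is earlier than v and whose other
   vertices are not earlier than v (a path from v to {earlier vertices}). *)
Definition back_path (V : finType) (e : rel V) (r : V -> nat) (v : V)
    (q : seq V) : Prop :=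
  [/\ q != [::], path e v q, uniq (v :: q), r (last v q) < r v &
      all (fun x => r v <= r x) (belast v q)].

(* A family is a list ps of tails q (each path is v :: q). *)
Definition backconn_le (V : finType) (e : rel V) (r : V -> nat) (v : V)
    (t : nat) : Prop :=
  forall ps : seq (seq V),
    (forall q, q \in ps -> back_path e r v q) ->
    (forall i j x, i < j < size ps ->
        x \in v :: nth [::] ps i -> x \in v :: nth [::] ps j -> x = v) ->
    size ps <= t.

Definition inf_adm_le (V : finType) (e : rel V) (t : nat) : Prop :=
  exists r : V -> nat, injective r /\ forall v, backconn_le e r v t.

From mathcomp Require Import all_boot zify.
Set Implicit Arguments. Unset Strict Implicit. Unset Printing Implicit Defensive.

(* The induction over clique-sums carries a stronger invariant: every clique
   can be placed first in an ordering of infinity-admissibility at most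
   t = 2a + D + 1.  In a graph with at most a vertices of degree > D, order the
   clique K, then the set H of high-degree vertices, then the rest.  A clique
   with more than D + 1 vertices lies in H, so a vertex of K or H has at most
   |K| + |H| <= t earlier vertices to end disjoint back-paths at, and any other
   vertex has at most D neighbours to start them with.
   For a clique-sum of G1 and G2 with the clique inside G1, order G1 first with
   the clique first, then the rest of G2 in an ordering with the separator
   first.  A back-path of a vertex of G1 shortcuts to one in G1, since every
   excursion into G2 leaves and re-enters through the separator, a clique of
   G1; a back-path of any other vertex stays in G2 and ends either earlier in
   G2 or in the separator. *)

Lemma mem_belast_uniq (T : eqType) (v : T) q x : uniq (v :: q) ->
  (x \in belast v q) = (x \in v :: q) && (x != last v q).
Proof.
rewrite (lastI v q) rcons_uniq mem_rcons inE => /andP[nl _].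
by case: eqP => [->|_]; [rewrite (negbTE nl) | rewrite andbT].
Qed.

Lemma last_filter (T : eqType) (P : pred T) x s :
  P x -> P (last x s) -> last x (filter P s) = last x s.
Proof.
elim: s x => [|y s IH] x Px //=.
case: ifP => Py /=; first exact: IH.
by case: s IH => [|z s] IH /= Pl; [rewrite Pl in Py | exact: IH].
Qed.

Lemma belast_filter_subset (T : eqType) (P : pred T) v q :
  P v -> P (last v q) -> uniq (v :: q) ->
  {subset belast v (filter P q) <= belast v q}.
Proof.
move=> Pv Pl uq x.
have uf : uniq (v :: filter P q) by have := filter_uniq P uq; rewrite /= Pv.
rewrite !mem_belast_uniq // last_filter // => /andP[xin ->]; rewrite andbT.
by move: xin; rewrite !inE mem_filter => /orP[->|/andP[_ ->]]; rewrite ?orbT.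
Qed.

Lemma path_filter_shortcut (T : eqType) (e e' : rel T) (P Q : pred T) x s :
  (forall a b, P a -> P b -> e a b -> e' a b) ->
  (forall a b, P a -> ~~ P b -> e a b -> Q a) ->
  (forall a b, ~~ P a -> P b -> e a b -> Q b) ->
  (forall a b, Q a -> Q b -> P a -> P b -> a != b -> e' a b) ->
  P x -> path e x s -> P (last x s) -> uniq (x :: filter P s) ->
  path e' x (filter P s).
Proof.
move=> inside leave enter sep Px.
(* [p] is the last vertex kept and [y] the current one; if [y] lies outside
   [P], the walk left [P] at [p], which is then in [Q]. *)
suff gen s' p y : P p -> y = p \/ ~~ P y /\ Q p -> path e y s' ->
    P (last y s') -> uniq (p :: filter P s') -> path e' p (filter P s').
  exact: gen (or_introl erefl).
elim: s' p y => [|z s' IH] p y Pp yp //= /andP[eyz pzs] Pl.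
case: ifP => Pz up.
- move: up; rewrite /= inE negb_or => /andP[/andP[npz _] up].
  apply/andP; split; last by apply: (IH z z) => //; left.
  case: yp => [Ey|[nPy Qp]]; first by subst y; exact: inside.
  by apply: sep => //; exact: enter eyz.
- apply: (IH p z) => //; right; split; first by rewrite Pz.
  by case: yp => [Ey|[]//]; subst y; apply: leave eyz => //; rewrite Pz.
Qed.

Lemma sub_belast_path (T : eqType) (e e' : rel T) (N : pred T) x s :
  (forall a b, N a -> e a b -> e' a b) ->
  all N (belast x s) -> path e x s -> path e' x s.
Proof.
move=> sub; elim: s x => //= y s IH x /andP[Nx Nb] /andP[exy pys].
by rewrite (sub _ _ Nx exy) /=; apply: IH.
Qed.

Lemma path_target_all (T : eqType) (Q : pred T) x s :
  path (fun _ b => Q b) x s -> all Q s.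
Proof. by elim: s x => //= y s IH x /andP[-> /IH]. Qed.

Lemma back_path_last (V : finType) (e : rel V) r v q :
  back_path e r v q -> last v q \in q.
Proof.
case=> _ _ _ lt _; move: (mem_last v q); rewrite inE => /orP[/eqP E|//].
by rewrite E ltnn in lt.
Qed.

(* Back-paths of [v] meet only in [v], so a choice of a vertex [h q] of each
   back-path [q] (never [v] itself) is injective on any admissible family. *)
Lemma backconn_le_hitting (V : finType) (e : rel V) r v (S : {set V})
    (h : seq V -> V) t :
  (forall q, back_path e r v q -> h q \in q /\ h q \in S) -> #|S| <= t ->
  backconn_le e r v t.
Proof.
move=> hit cardS ps ps_back disj.
have h_neq i j : i < j < size ps -> h (nth [::] ps i) != h (nth [::] ps j).
  move=> /andP[lij ljs]; have lis : i < size ps by apply: ltn_trans ljs.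
  have [hi _] := hit _ (ps_back _ (mem_nth [::] lis)).
  have [hj _] := hit _ (ps_back _ (mem_nth [::] ljs)).
  apply/eqP => E.
  have hi' : h (nth [::] ps i) \in v :: nth [::] ps i by rewrite inE hi orbT.
  have hj' : h (nth [::] ps i) \in v :: nth [::] ps j by rewrite inE E hj orbT.
  have Ev := disj i j _ (introT andP (conj lij ljs)) hi' hj'.
  have [_ _ u _ _] := ps_back _ (mem_nth [::] lis).
  by move: u; rewrite /= -Ev hi.
have uh : uniq (map h ps).
  apply/(uniqP v) => i j; rewrite !inE size_map => Hi Hj.
  rewrite (nth_map [::]) // (nth_map [::]) // => E.
  case: (ltngtP i j) => // lt.
    by move: (h_neq i j); rewrite lt Hj /= E eqxx => /(_ isT).
  by move: (h_neq j i); rewrite lt Hi /= E eqxx => /(_ isT).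
rewrite -(size_map h) -(card_uniqP uh); apply: leq_trans cardS.
apply: subset_leq_card; apply/subsetP => x /mapP [q qin ->].
by have [] := hit _ (ps_back _ qin).
Qed.

Lemma backconn_le_transfer (V W : finType) (e : rel V) (e' : rel W)
    (r : V -> nat) (r' : W -> nat) (v : V) (g : V -> W) (P : pred V)
    (tr : seq V -> seq W) t :
  {in P &, injective g} ->
  (forall q, back_path e r v q -> back_path e' r' (g v) (tr q)) ->
  (forall q x, back_path e r v q -> x \in g v :: tr q ->
      exists2 w, w \in v :: q & P w /\ x = g w) ->
  backconn_le e' r' (g v) t -> backconn_le e r v t.
Proof.
move=> ginj tr_back tr_mem bc ps ps_back disj.
rewrite -(size_map tr); apply: bc.
- by move=> q' /mapP [q qin ->]; exact: tr_back (ps_back _ qin).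
- move=> i j x /andP[lij ljs]; rewrite size_map in ljs.
  have lis : i < size ps by apply: ltn_trans ljs.
  rewrite (nth_map [::]) // (nth_map [::]) // => xi xj.
  have [wi wiin [Pwi Ewi]] := tr_mem _ _ (ps_back _ (mem_nth [::] lis)) xi.
  have [wj wjin [Pwj Ewj]] := tr_mem _ _ (ps_back _ (mem_nth [::] ljs)) xj.
  rewrite Ewi in Ewj; have E := ginj _ _ Pwi Pwj Ewj; subst wj.
  by rewrite Ewi (disj i j wi (introT andP (conj lij ljs)) wiin wjin).
Qed.

Lemma back_path_map (V W : finType) (e' : rel W) (r' : W -> nat)
    (g : V -> W) (P : pred V) v q :
  {in P &, injective g} -> all P (v :: q) -> q != [::] -> uniq (v :: q) ->
  path e' (g v) (map g q) -> r' (g (last v q)) < r' (g v) ->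
  {in belast v q, forall x, r' (g v) <= r' (g x)} ->
  back_path e' r' (g v) (map g q).
Proof.
move=> ginj Pvq qn uq pth lt bl; split => //.
- by rewrite -size_eq0 size_map size_eq0.
- rewrite -map_cons map_inj_in_uniq // => x y /(allP Pvq) Px /(allP Pvq) Py.
  exact: ginj.
- by rewrite last_map.
- by rewrite belast_map; apply/allP => _ /mapP [x xin ->]; exact: bl.
Qed.

Definition class_rank (V : finType) (c : V -> nat) (x : V) : nat :=
  c x * #|V| + enum_rank x.

Lemma class_rank_inj (V : finType) (c : V -> nat) : injective (class_rank c).
Proof.
have rmod x : class_rank c x %% #|V| = enum_rank x.
  by rewrite modnMDl modn_small.
by move=> x y E; apply/enum_rank_inj/val_inj; rewrite /= -rmod E rmod.
Qed.

Lemma class_rank_lt (V : finType) (c : V -> nat) x y :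
  c x < c y -> class_rank c x < class_rank c y.
Proof.
move=> lt; rewrite /class_rank -addSn; apply: leq_trans (leq_addr _ _).
apply: leq_trans (leq_mul lt (leqnn _)); rewrite mulSn addnC addnS ltn_add2r.
exact: ltn_ord.
Qed.

Lemma class_rank_leq (V : finType) (c : V -> nat) x y :
  class_rank c x < class_rank c y -> c x <= c y.
Proof.
by move=> lt; rewrite leqNgt; apply/negP => /class_rank_lt; rewrite ltnNge (ltnW lt).
Qed.

Definition clique_first_adm_le (t : nat) (V : finType) (e : rel V) : Prop :=
  forall K : {set V}, is_clique e (fun x => x \in K) ->
  exists r : V -> nat, [/\ injective r,
     (forall x y, x \in K -> y \notin K -> r x < r y) &
     forall v, backconn_le e r v t].

Lemma card_clique_le D a (V : finType) (e : rel V) (K : {set V}) :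
  few_high_degree D a e -> is_clique e (fun x => x \in K) -> #|K| <= a + D.+1.
Proof.
move=> high cK; have [small|big] := leqP #|K| D.+1.
  exact: leq_trans small (leq_addl _ _).
apply: leq_trans (leq_addr _ _); apply: leq_trans high.
apply: subset_leq_card; apply/subsetP => x xK; rewrite inE /degree.
move: big; rewrite (cardsD1 x K) xK add1n ltnS => /leq_trans; apply.
apply: subset_leq_card; apply/subsetP => y; rewrite !inE => /andP[nyx yK].
by apply: cK => //; rewrite eq_sym.
Qed.

Lemma few_high_degree_clique_first D a (V : finType) (e : rel V) :
  few_high_degree D a e -> clique_first_adm_le (a + a + D.+1) e.
Proof.
move=> high K cK; have := high; rewrite /few_high_degree.
set H := [set x | D < degree e x] => cardH.
pose c x := if x \in K then 0 else if x \in H then 1 else 2.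
exists (class_rank c); split.
- exact: class_rank_inj.
- by move=> x y xK yK; apply: class_rank_lt; rewrite /c xK (negbTE yK); case: ifP.
- move=> v; have [cv|cv] := leqP (c v) 1.
  + apply: (backconn_le_hitting
      (S := [set x | class_rank c x < class_rank c v]) (h := last v)).
      move=> q bq; split; first exact: back_path_last bq.
      by rewrite inE; case: bq => _ _ _ lt _.
    apply: (@leq_trans #|K :|: H|).
      apply: subset_leq_card; apply/subsetP => x; rewrite !inE => /class_rank_leq.
      move=> /leq_trans /(_ cv); rewrite /c inE.
      by case: (x \in K) => //=; case: ltnP.
    by rewrite cardsU; have := card_clique_le high cK; lia.
  + apply: (backconn_le_hitting (S := [set y | e v y]) (h := head v)).
      case=> [|x q] [qn pth _ _ _] //; move: pth => /= /andP[evx _].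
      by rewrite !inE eqxx evx.
    move: cv; rewrite /c inE; case: (v \in K) => //=.
    case: (ltnP D (degree e v)) => // vH _.
    by apply: leq_trans vH _; lia.
Qed.

Lemma exists_eq_codom (A : finType) (B : eqType) (f : A -> B) (x : B) :
  [exists a, f a == x] = (x \in codom f).
Proof. by apply/existsP/codomP => [[a /eqP <-]|[a ->]]; exists a. Qed.

Definition preim_pick (A : finType) (B : eqType) (f : A -> B) (a0 : A) (x : B) : A :=
  odflt a0 [pick a | f a == x].

Lemma preim_pickK (A : finType) (B : eqType) (f : A -> B) (a0 : A) :
  injective f -> cancel f (preim_pick f a0).
Proof.
move=> f_inj a; rewrite /preim_pick.
by case: pickP => [a' /eqP /f_inj // | /(_ a)]; rewrite eqxx.
Qed.

Lemma preim_pickE (A : finType) (B : eqType) (f : A -> B) (a0 : A) (x : B) :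
  injective f -> x \in codom f -> f (preim_pick f a0 x) = x.
Proof. by move=> f_inj /codomP [a ->]; rewrite preim_pickK. Qed.

Section GluedOrdering.

Variables (t : nat) (V1 V2 V : finType) (e1 : rel V1) (e2 : rel V2) (e : rel V).
Variables (f1 : V1 -> V) (f2 : V2 -> V).
Hypotheses (e_irr : irreflexive e) (f1_inj : injective f1) (f2_inj : injective f2).
Hypothesis codom_cover : forall x, (x \in codom f1) || (x \in codom f2).
Hypothesis separator_clique1 : is_clique e1 (fun y => f1 y \in codom f2).
Hypothesis edge_lift : forall x x', e x x' ->
  (exists y y', [/\ f1 y = x, f1 y' = x' & e1 y y']) \/
  (exists z z', [/\ f2 z = x, f2 z' = x' & e2 z z']).

Variables (r1 : V1 -> nat) (r2 : V2 -> nat).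
Hypotheses (r1_inj : injective r1) (r2_inj : injective r2).
Hypothesis r2_separator_first : forall z z',
  f2 z \in codom f1 -> f2 z' \notin codom f1 -> r2 z < r2 z'.
Hypotheses (bc1 : forall y, backconn_le e1 r1 y t)
           (bc2 : forall z, backconn_le e2 r2 z t).

Lemma edge_codom1 y y' : e (f1 y) (f1 y') -> e1 y y'.
Proof.
move=> ee; have nyy : y != y' by apply: contraTneq ee => ->; rewrite e_irr.
case: (edge_lift ee) => [[u [u' [/f1_inj -> /f1_inj -> //]]]|[z [z' [Ez Ez' _]]]].
by apply: separator_clique1 nyy; rewrite -?Ez -?Ez' codom_f.
Qed.

Lemma edge_off_codom1 a b : e a b ->
  (a \notin codom f1) || (b \notin codom f1) ->
  exists z z', [/\ f2 z = a, f2 z' = b & e2 z z'].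
Proof.
case/edge_lift => [[y [y' [<- <- _]]]|//].
by rewrite !codom_f.
Qed.

Let M := \max_(y : V1) (r1 y).+1.

Lemma r1_lt_max y : r1 y < M.
Proof. by rewrite /M (bigD1 y) //= leq_max leqnn. Qed.

(* The final [0] is never reached, as [codom f1] and [codom f2] cover [V]. *)
Definition glued_rank (x : V) : nat :=
  if [pick y | f1 y == x] is Some y then r1 y
  else if [pick z | f2 z == x] is Some z then M + r2 z else 0.

Lemma glued_rank_f1 y : glued_rank (f1 y) = r1 y.
Proof.
by rewrite /glued_rank; case: pickP => [y' /eqP /f1_inj -> // | /(_ y)]; rewrite eqxx.
Qed.

Lemma glued_rank_f2 z : f2 z \notin codom f1 -> glued_rank (f2 z) = M + r2 z.
Proof.
move=> nz; rewrite /glued_rank; case: pickP => [y /eqP Ey|_].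
  by rewrite -Ey codom_f in nz.
by case: pickP => [z' /eqP /f2_inj -> // | /(_ z)]; rewrite eqxx.
Qed.

Lemma glued_rank_codom1 x : x \in codom f1 -> glued_rank x < M.
Proof. by case/codomP => y ->; rewrite glued_rank_f1 r1_lt_max. Qed.

Lemma glued_rank_notcodom1 x : x \notin codom f1 -> M <= glued_rank x.
Proof.
move=> nx; move: (codom_cover x); rewrite (negbTE nx) => /codomP [z Ez].
by rewrite Ez glued_rank_f2 -?Ez // leq_addr.
Qed.

Lemma glued_rank_first_codom1 x x' :
  x \in codom f1 -> x' \notin codom f1 -> glued_rank x < glued_rank x'.
Proof.
by move=> x1 nx'; exact: leq_trans (glued_rank_codom1 x1) (glued_rank_notcodom1 nx').
Qed.

Lemma glued_rank_inj : injective glued_rank.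
Proof.
move=> x x'.
case: (boolP (x \in codom f1)) => x1; case: (boolP (x' \in codom f1)) => x1'.
- case/codomP: x1 => y ->; case/codomP: x1' => y' ->.
  by rewrite !glued_rank_f1 => /r1_inj ->.
- by move=> E; have := glued_rank_first_codom1 x1 x1'; rewrite E ltnn.
- by move=> E; have := glued_rank_first_codom1 x1' x1; rewrite E ltnn.
move: (codom_cover x) (codom_cover x'); rewrite (negbTE x1) (negbTE x1') /=.
case/codomP => z Ez; case/codomP => z' Ez'; subst x x'.
by rewrite !glued_rank_f2 // => /addnI /r2_inj ->.
Qed.

Lemma back_path_codom1 y0 q : back_path e glued_rank (f1 y0) q ->
  back_path e1 r1 y0 (map (preim_pick f1 y0) [seq x <- q | x \in codom f1]).
Proof.
set g1 := preim_pick f1 y0; set P : pred V := fun x => x \in codom f1.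
move=> bq; have [qn pth uq lt bl] := bq.
have g1K x : P x -> f1 (g1 x) = x by exact: preim_pickE.
have rank_g1 x : P x -> r1 (g1 x) = glued_rank x.
  by move=> Px; rewrite -{2}(g1K x Px) glued_rank_f1.
have P_last : P (last (f1 y0) q).
  apply: contraLR lt => nl; rewrite -leqNgt glued_rank_f1 ltnW //.
  exact: leq_trans (r1_lt_max y0) (glued_rank_notcodom1 nl).
have Py0 : P (f1 y0) by exact: codom_f.
have uf : uniq (f1 y0 :: filter P q) by have := filter_uniq P uq; rewrite /= Py0.
have lqin : last (f1 y0) q \in filter P q.
  by rewrite mem_filter P_last (back_path_last bq).
rewrite -[y0 in back_path _ _ y0](preim_pickK y0 f1_inj) -/g1.
apply: (back_path_map (P := P)) => //.
- by move=> x x' Px Px' E; rewrite -(g1K x Px) -(g1K x' Px') E.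
- by rewrite /= Py0; exact: filter_all.
- by apply: contraTneq lqin => ->.
- rewrite path_map.
  apply: (path_filter_shortcut (Q := fun x => x \in codom f2) _ _ _ _ Py0 pth P_last uf).
  + by move=> a b Pa Pb; rewrite -{1}(g1K a Pa) -{1}(g1K b Pb) => /edge_codom1.
  + move=> a b _ nPb /edge_off_codom1; rewrite nPb orbT => /(_ isT) [z [z' [<- _ _]]].
    exact: codom_f.
  + move=> a b nPa _ /edge_off_codom1; rewrite nPa => /(_ isT) [z [z' [_ <- _]]].
    exact: codom_f.
  + move=> a b Qa Qb Pa Pb nab; apply: separator_clique1; rewrite ?g1K //.
    by apply: contra nab => /eqP E; rewrite -(g1K a Pa) -(g1K b Pb) E.
- by rewrite last_filter // !rank_g1.
- move=> x xb; have := mem_belast xb.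
  rewrite inE mem_filter => /orP[/eqP ->|/andP[Px _]].
    by rewrite leqnn.
  rewrite !rank_g1 //; apply: (allP bl).
  exact: belast_filter_subset xb.
Qed.

Lemma back_path_notcodom1_belast v q : v \notin codom f1 ->
  back_path e glued_rank v q -> all (fun x => x \notin codom f1) (belast v q).
Proof.
move=> nv [_ _ _ _ bl]; apply/allP => x xb.
apply: contraTN (allP bl x xb) => x1; rewrite -ltnNge.
exact: glued_rank_first_codom1.
Qed.

Lemma back_path_notcodom1_in_G2 z0 q : f2 z0 \notin codom f1 ->
  back_path e glued_rank (f2 z0) q ->
  path [rel a b | (b \in codom f2) && e2 (preim_pick f2 z0 a) (preim_pick f2 z0 b)]
    (f2 z0) q.
Proof.
move=> nz0 bq; have [_ pth _ _ _] := bq.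
apply: (sub_belast_path _ (back_path_notcodom1_belast nz0 bq) pth).
move=> a b na /edge_off_codom1.
by rewrite na => /(_ isT) [z [z' [<- <- ezz]]] /=; rewrite codom_f !preim_pickK.
Qed.

Lemma back_path_notcodom1_codom2 z0 q : f2 z0 \notin codom f1 ->
  back_path e glued_rank (f2 z0) q -> all (fun x => x \in codom f2) (f2 z0 :: q).
Proof.
move=> nz0 /(back_path_notcodom1_in_G2 nz0) pth2.
by rewrite /= codom_f; apply: path_target_all; apply: sub_path pth2 => a b /andP[].
Qed.

Lemma back_path_notcodom1 z0 q : f2 z0 \notin codom f1 ->
  back_path e glued_rank (f2 z0) q -> back_path e2 r2 z0 (map (preim_pick f2 z0) q).
Proof.
set g2 := preim_pick f2 z0; set P : pred V := fun x => x \in codom f2.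
move=> nz0 bq; have [qn _ uq lt bl] := bq.
have pth2 := back_path_notcodom1_in_G2 nz0 bq.
have Pq := back_path_notcodom1_codom2 nz0 bq.
have g2K x : P x -> f2 (g2 x) = x by exact: preim_pickE.
have g2z0 : g2 (f2 z0) = z0 by exact: preim_pickK.
have rank_g2 x : P x -> x \notin codom f1 -> glued_rank x = M + r2 (g2 x).
  by move=> Px nx; rewrite -{1}(g2K x Px) glued_rank_f2 ?g2K.
rewrite -[z0 in back_path _ _ z0]g2z0.
apply: (back_path_map (P := P)) => //.
- by move=> x x' Px Px' E; rewrite -(g2K x Px) -(g2K x' Px') E.
- by rewrite path_map; apply: sub_path pth2 => a b /andP[].
- set L := last (f2 z0) q; have PL : P L by apply: (allP Pq); exact: mem_last.
  have [L1|nL1] := boolP (L \in codom f1).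
    by rewrite g2z0; apply: r2_separator_first; rewrite ?g2K.
  by move: lt; rewrite -/L (rank_g2 L) // glued_rank_f2 // ltn_add2l g2z0.
- move=> x xb; have Px := allP Pq x (mem_belast xb).
  have nx := allP (back_path_notcodom1_belast nz0 bq) x xb.
  by move: (allP bl x xb); rewrite (rank_g2 x) // glued_rank_f2 // leq_add2l g2z0.
Qed.

Lemma backconn_codom1 y0 : backconn_le e glued_rank (f1 y0) t.
Proof.
set g1 := preim_pick f1 y0.
have g1K x : x \in codom f1 -> f1 (g1 x) = x by exact: preim_pickE.
have g1y0 : g1 (f1 y0) = y0 by exact: preim_pickK.
apply: (backconn_le_transfer (g := g1) (P := fun x => x \in codom f1)
  (tr := fun q => map g1 [seq x <- q | x \in codom f1])); last by rewrite g1y0.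
- by move=> x x' x1 x1' E; rewrite -(g1K x x1) -(g1K x' x1') E.
- by move=> q; rewrite g1y0; exact: back_path_codom1.
move=> q x _; rewrite -map_cons => /mapP [w]; rewrite inE mem_filter.
case/orP => [/eqP -> ->|/andP [w1 wq] ->].
  by exists (f1 y0); rewrite ?mem_head ?codom_f.
by exists w; rewrite // inE wq orbT.
Qed.

Lemma backconn_notcodom1 z0 : f2 z0 \notin codom f1 ->
  backconn_le e glued_rank (f2 z0) t.
Proof.
move=> nz0; set g2 := preim_pick f2 z0.
have g2K x : x \in codom f2 -> f2 (g2 x) = x by exact: preim_pickE.
have g2z0 : g2 (f2 z0) = z0 by exact: preim_pickK.
apply: (backconn_le_transfer (g := g2) (P := fun x => x \in codom f2) (tr := map g2));
  last by rewrite g2z0.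
- by move=> x x' x2 x2' E; rewrite -(g2K x x2) -(g2K x' x2') E.
- by move=> q; rewrite g2z0; exact: back_path_notcodom1.
move=> q x bq; rewrite -map_cons => /mapP [w wq ->]; exists w => //; split => //.
exact: (allP (back_path_notcodom1_codom2 nz0 bq)).
Qed.

Lemma glued_backconn v : backconn_le e glued_rank v t.
Proof.
have [/codomP [y0 ->]|nv] := boolP (v \in codom f1); first exact: backconn_codom1.
move: (codom_cover v); rewrite (negbTE nv) => /codomP [z0 Ev].
by rewrite Ev in nv *; exact: backconn_notcodom1.
Qed.

End GluedOrdering.

Lemma clique_first_glued t (V1 V2 V : finType) (e1 : rel V1) (e2 : rel V2)
    (e : rel V) (f1 : V1 -> V) (f2 : V2 -> V) :
  clique_first_adm_le t e1 -> clique_first_adm_le t e2 -> irreflexive e ->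
  injective f1 -> injective f2 ->
  (forall x, (x \in codom f1) || (x \in codom f2)) ->
  is_clique e1 (fun y => f1 y \in codom f2) ->
  is_clique e2 (fun z => f2 z \in codom f1) ->
  (forall x x', e x x' ->
     (exists y y', [/\ f1 y = x, f1 y' = x' & e1 y y']) \/
     (exists z z', [/\ f2 z = x, f2 z' = x' & e2 z z'])) ->
  forall K : {set V}, is_clique e (fun x => x \in K) -> {subset K <= codom f1} ->
  exists r : V -> nat, [/\ injective r,
     (forall x y, x \in K -> y \notin K -> r x < r y) &
     forall v, backconn_le e r v t].
Proof.
move=> adm1 adm2 irr inj1 inj2 cover cl1 cl2 lift K cK sK.
have [|r1 [r1_inj K1_first bc1]] := adm1 [set y | f1 y \in K].
  move=> y y'; rewrite !inE => yK y'K nyy; apply: (edge_codom1 irr inj1 cl1 lift).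
  by apply: cK => //; apply: contra nyy => /eqP /inj1 ->.
have [|r2 [r2_inj sep_first bc2]] := adm2 [set z | f2 z \in codom f1].
  by move=> z z'; rewrite !inE; exact: cl2.
have r2_sep z z' : f2 z \in codom f1 -> f2 z' \notin codom f1 -> r2 z < r2 z'.
  by move=> z1 nz1; apply: sep_first; rewrite inE.
exists (glued_rank f1 f2 r1 r2); split.
- exact: (glued_rank_inj inj1 inj2 cover r1_inj r2_inj).
- move=> x x' xK nx'K; have /codomP [y Ey] := sK x xK; subst x.
  have [/codomP [y' Ey']|nx'] := boolP (x' \in codom f1).
    by subst x'; rewrite !(glued_rank_f1 _ inj1); apply: K1_first; rewrite inE.
  exact: (glued_rank_first_codom1 inj1 inj2 cover r1 r2 (codom_f f1 y) nx').
- exact: (glued_backconn irr inj1 inj2 cover cl1 lift r2_sep bc1 bc2).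
Qed.

Lemma clique_sum_clique_first t (V1 V2 V : finType) (e1 : rel V1) (e2 : rel V2)
    (e : rel V) :
  clique_first_adm_le t e1 -> clique_first_adm_le t e2 -> simple_graph e ->
  is_clique_sum e1 e2 e -> clique_first_adm_le t e.
Proof.
move=> adm1 adm2 [_ irr] [f1 [f2 [[inj1 inj2 cov cl1 cl2] [_ _ lift]]]] K cK.
have cover x : (x \in codom f1) || (x \in codom f2).
  by case: (cov x) => [[y <-]|[z <-]]; rewrite codom_f ?orbT.
have cl1' : is_clique e1 (fun y => f1 y \in codom f2).
  by move=> y y'; rewrite -!exists_eq_codom; exact: cl1.
have cl2' : is_clique e2 (fun z => f2 z \in codom f1).
  by move=> z z'; rewrite -!exists_eq_codom; exact: cl2.
have [/subsetP sK|/subsetPn [x0 x0K nx0]] := boolP (K \subset codom f1).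
  exact: (clique_first_glued adm1 adm2 irr inj1 inj2 cover cl1' cl2' lift cK sK).
apply: (clique_first_glued adm2 adm1 irr inj2 inj1 _ cl2' cl1' _ cK).
- by move=> x; rewrite orbC.
- by move=> x x' /lift [?|?]; [right | left].
move=> x xK; have [-> | nx] := eqVneq x x0.
  by move: (cover x0); rewrite (negbTE nx0).
have ee : e x0 x by apply: cK => //; rewrite eq_sym.
have := edge_off_codom1 lift ee; rewrite nx0 => /(_ isT) [z [z' [_ <- _]]].
exact: codom_f.
Qed.

Theorem theorem6 : forall D a : nat, exists T : nat,
  forall (V : finType) (e : rel V),
    simple_graph e ->
    clique_sum_of (few_high_degree D a) e ->
    inf_adm_le e T.
Proof.
move=> D a; exists (a + a + D.+1) => V e _ cs.
have adm : clique_first_adm_le (a + a + D.+1) e.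
  elim: cs => {V e} [V e _ high | V1 e1 V2 e2 V e _ adm1 _ adm2 sg cs].
  - exact: few_high_degree_clique_first.
  - exact: clique_sum_clique_first adm1 adm2 sg cs.
have [|r [r_inj _ bc]] := adm set0; first by move=> x y; rewrite inE.
by exists r.
Qed.
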